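(* Let $n,m\ge 3$, let $G=(V,E)=P_n\square P_m$ be the grid graph, and let $R\subseteq V$. If every vertex of $G$ has a locally resolved neighbourhood with respect to $R$, then $R$ is a resolving set for $G$.
   Context: The grid graph $P_n\square P_m$ has vertex set $\{(i,j):0\le i\le n-1,\ 0\le j\le m-1\}$, with $(i,j)$ adjacent to $(k,l)$ iff $|i-k|+|j-l|=1$; the distance is $d((i,j),(k,l))=|i-k|+|j-l|$. A vertex $w$ resolves two vertices $u,v$ if $d(w,u)\ne d(w,v)$. A set $R$ is resolving if every pair of distinct vertices is resolved by some vertex of $R$. A vertex $x$ has a locally resolved neighbourhood with respect to $R$ if every pair of distinct neighbours of $x$ is resolved by some vertex of $R$. *)

From mathcomp Require Import all_boot.
Set Implicit Arguments. Unset Strict Implicit. Unset Printing Implicit Defensive.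

Definition absdiff (a b : nat) : nat := (a - b) + (b - a).

Definition grid_dist n m (u v : 'I_n * 'I_m) : nat :=
  absdiff u.1 v.1 + absdiff u.2 v.2.

Definition grid_adj n m (u v : 'I_n * 'I_m) : bool := grid_dist u v == 1.

Definition resolves n m (w u v : 'I_n * 'I_m) : bool :=
  grid_dist w u != grid_dist w v.

Definition resolving n m (R : {set 'I_n * 'I_m}) : Prop :=
  forall u v : 'I_n * 'I_m, u != v -> exists2 w, w \in R & resolves w u v.

Definition locally_resolved n m (R : {set 'I_n * 'I_m}) (x : 'I_n * 'I_m) : Prop :=
  forall u v : 'I_n * 'I_m, grid_adj x u -> grid_adj x v -> u != v ->
    exists2 w, w \in R & resolves w u v.

From mathcomp Require Import all_boot zify.

Set Implicit Arguments.
Unset Strict Implicit.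
Unset Printing Implicit Defensive.

(* The grid is bipartite, so a pair at odd distance is resolved by every
   vertex; it only remains to see that R is nonempty.  If d(u, v) is even,
   the perpendicular bisector of u and v (a staircase, or a straight line when
   u and v share a row or a column) passes between two neighbours s, t of a
   common vertex lying in the bounding box of u and v, in such a way that every
   vertex equidistant from u and v is also equidistant from s and t.  Hence the
   vertex of R resolving s and t also resolves u and v. *)

Definition mdist (p q : nat * nat) : nat := absdiff p.1 q.1 + absdiff p.2 q.2.

Definition in_bbox (p q r : nat * nat) : bool :=
  (r.1 <= maxn p.1 q.1) && (r.2 <= maxn p.2 q.2).

Lemma mdistC p q : mdist p q = mdist q p.
Proof. by rewrite /mdist /absdiff; lia. Qed.

Lemma in_bboxC p q : in_bbox p q =1 in_bbox q p.
Proof. by move=> r; rewrite /in_bbox maxnC [maxn p.2 _]maxnC. Qed.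

Lemma odd_absdiff x y : odd (absdiff x y) = odd x (+) odd y.
Proof.
rewrite /absdiff; case: (leqP x y) => h.
- by rewrite (eqP (_ : x - y == 0)) ?subn_eq0 // add0n oddB // addbC.
- by rewrite (eqP (_ : y - x == 0)) ?subn_eq0 ?(ltnW h) // addn0 oddB // ltnW.
Qed.

Lemma odd_mdist p q : odd (mdist p q) = odd (p.1 + p.2) (+) odd (q.1 + q.2).
Proof.
rewrite /mdist oddD !odd_absdiff !oddD.
by case: (odd p.1); case: (odd p.2); case: (odd q.1); case: (odd q.2).
Qed.

Lemma odd_mdist_resolves p q w : odd (mdist p q) -> mdist w p != mdist w q.
Proof.
rewrite odd_mdist => hodd; apply/eqP => /(congr1 odd); rewrite !odd_mdist.
by move: hodd; case: (odd (p.1 + _)); case: (odd (q.1 + _)); case: (odd (w.1 + _)).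
Qed.

Section EquidistanceTransfer.

Variables (a b c d : nat) (w : nat * nat).

Lemma mdist_eq_diag i j :
  a <= i < c -> b <= j < d -> (i + j).*2.+2 = a + b + c + d ->
  mdist w (a, b) = mdist w (c, d) -> mdist w (i, j) = mdist w (i.+1, j.+1).
Proof.
rewrite /mdist /absdiff /= => /andP[? ?] /andP[? ?] ?.
by case: (leqP w.1 i); case: (leqP w.2 j); lia.
Qed.

Lemma mdist_eq_antidiag i j :
  a <= i < c -> d <= j < b -> i.*2 + b + d = a + c + j.*2 ->
  mdist w (a, b) = mdist w (c, d) -> mdist w (i, j.+1) = mdist w (i.+1, j).
Proof.
rewrite /mdist /absdiff /= => /andP[? ?] /andP[? ?] ?.
by case: (leqP w.1 i); case: (leqP w.2 j); lia.
Qed.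

Lemma mdist_eq_row e :
  a < c -> e.*2 = a + c ->
  mdist w (a, b) = mdist w (c, b) -> mdist w (e.-1, b) = mdist w (e.+1, b).
Proof. by rewrite /mdist /absdiff /= => ? ?; case: (leqP w.1 e); lia. Qed.

Lemma mdist_eq_column e :
  b < d -> e.*2 = b + d ->
  mdist w (a, b) = mdist w (a, d) -> mdist w (a, e.-1) = mdist w (a, e.+1).
Proof. by rewrite /mdist /absdiff /= => ? ?; case: (leqP w.2 e); lia. Qed.

End EquidistanceTransfer.

Ltac close_pair equi :=
  split; [ | | | | by move=> w; apply: equi; lia];
  rewrite /= /in_bbox /mdist /absdiff /=; try (apply/eqP; case); lia.

Lemma even_mdist_adjacent_pair p q : p != q -> ~~ odd (mdist p q) ->
  exists x s t, [/\ all (in_bbox p q) [:: x; s; t], mdist x s = 1,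
    mdist x t = 1, s != t &
    forall w, mdist w p = mdist w q -> mdist w s = mdist w t].
Proof.
wlog lex : p q / (p.1 < q.1) || (p.1 == q.1) && (p.2 < q.2).
  move=> gen pq hodd.
  case: (boolP ((p.1 < q.1) || (p.1 == q.1) && (p.2 < q.2))) => [lex|nlex].
    exact: gen.
  have qlex : (q.1 < p.1) || (q.1 == p.1) && (q.2 < p.2).
    by move: pq nlex {gen hodd}; case: p q => [a b] [c d]; rewrite xpair_eqE /=; lia.
  rewrite eq_sym mdistC in pq hodd.
  have [x [s [t [box hs ht st eqst]]]] := gen q p qlex pq hodd.
  exists x, s, t; split=> //; first by rewrite (eq_all (in_bboxC p q)).
  by move=> w /esym /eqst.
case: p q lex => a b [c d] /= lex _ /negbTE hodd.
have := odd_double_half (mdist (a, b) (c, d)); rewrite hodd add0n /mdist /absdiff /=.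
set h := _./2; clearbody h => hd.
case: (ltngtP a c) => hac; last first.
- subst c; have bd : b < d by lia.
  exists (a, b + h), (a, (b + h).-1), (a, (b + h).+1); close_pair mdist_eq_column.
- by move: lex; lia.
(* In the two staircase cases the pair sits on the staircase of
   coordinate sum (or difference) halfway between u and v; the [minn] keeps it
   inside the bounding box. *)
case: (ltngtP b d) => hbd.
- pose i := a + minn h.-1 (c - a).-1; pose j := b + h.-1 - minn h.-1 (c - a).-1.
  exists (i.+1, j), (i, j), (i.+1, j.+1); rewrite {}/i {}/j; close_pair mdist_eq_diag.
- pose i := a + minn h.-1 (c - a).-1; pose j := b + minn h.-1 (c - a).-1 - h.
  exists (i.+1, j.+1), (i, j.+1), (i.+1, j); rewrite {}/i {}/j; close_pair mdist_eq_antidiag.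
- subst d.
  exists (a + h, b), ((a + h).-1, b), ((a + h).+1, b); close_pair mdist_eq_row.
Qed.

Definition pt n m (u : 'I_n * 'I_m) : nat * nat := (val u.1, val u.2).

Lemma grid_distE n m (u v : 'I_n * 'I_m) : grid_dist u v = mdist (pt u) (pt v).
Proof. by []. Qed.

Lemma pt_inj n m : injective (@pt n m).
Proof. by move=> [i j] [k l] [/val_inj -> /val_inj ->]. Qed.

Lemma in_bbox_pt n m (u v : 'I_n * 'I_m) r :
  in_bbox (pt u) (pt v) r -> exists y : 'I_n * 'I_m, pt y = r.
Proof.
case: r => i j /andP[/= hi hj].
have hin : i < n by apply: leq_ltn_trans hi _; rewrite gtn_max !ltn_ord.
have hjm : j < m by apply: leq_ltn_trans hj _; rewrite gtn_max !ltn_ord.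
by exists (Ordinal hin, Ordinal hjm).
Qed.

Lemma locally_resolved_nonempty n m (R : {set 'I_n * 'I_m}) :
  0 < n -> 2 < m -> (forall x, locally_resolved R x) -> exists w, w \in R.
Proof.
move=> n0 m2 hloc; have m0 : 0 < m by apply: ltn_trans m2.
have m1 : 1 < m by apply: ltn_trans m2.
have [w wR _] := hloc (Ordinal n0, Ordinal m1) (Ordinal n0, Ordinal m0)
  (Ordinal n0, Ordinal m2) erefl erefl isT.
by exists w.
Qed.

Theorem theorem3 (n m : nat) (R : {set 'I_n * 'I_m}) :
  3 <= n -> 3 <= m ->
  (forall x : 'I_n * 'I_m, locally_resolved R x) ->
  resolving R.
Proof.
move=> hn hm hloc u v huv.
have puv : pt u != pt v by apply: contra_neq huv; apply: pt_inj.
case: (boolP (odd (mdist (pt u) (pt v)))) => hodd.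
  have n0 : 0 < n by apply: leq_trans hn.
  have [w wR] := locally_resolved_nonempty n0 hm hloc.
  by exists w; rewrite // /resolves !grid_distE odd_mdist_resolves.
have [x [s [t [/and4P[bx bs bt _] hs ht st hst]]]] :=
  even_mdist_adjacent_pair puv hodd.
have [[x' ?] [s' ?] [t' ?]] := And3 (in_bbox_pt bx) (in_bbox_pt bs) (in_bbox_pt bt).
subst x s t.
have s't' : s' != t' by apply: contra_neq st => ->.
have [w wR hw] := hloc x' s' t' (introT eqP hs) (introT eqP ht) s't'.
exists w => //; move: hw; rewrite /resolves !grid_distE.
by apply: contra_neq; apply: hst.
Qed.
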